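(* Let $N>1$ and $d\ge1$. Consider molecules with atom features $s\in\mathbb{R}^{N\times d}$ and coordinates $\vec r\in\mathbb{R}^{N\times3}$, with node identity features $\tilde s_j=\mathrm{Concatenate}(s_j,j)\in\mathbb{R}^{d+1}$, and local environments $\mathrm{LE}_i=\{(\tilde s_j,\vec r_{ij}): j\in\{1,\dots,N\}\}$. There exists a function $g$ mapping such local environments to $\mathbb{R}^{3\times 3}$ which is $\mathrm{O}(3)$-equivariant, i.e. $g(\{(\tilde s_j,\vec r_{ij}o^T)\}_j)=g(\{(\tilde s_j,\vec r_{ij})\}_j)o^T$ for all $o\in\mathrm{O}(3)$, such that for every molecule and every $i$, the matrix $\vec E_i=g(\mathrm{LE}_i)$, with $k=\mathrm{rank}(\vec E_i)$, has its first $k$ rows forming an orthonormal basis of $\mathrm{span}\{\vec r_{ij}: j=1,\dots,N\}$ and its remaining $3-k$ rows equal to zero.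
   Context: $\vec r_i\in\mathbb{R}^{1\times 3}$ is row $i$ of $\vec r$, $\vec r_{ij}=\vec r_i-\vec r_j$, and $\mathrm{O}(3)=\{Q\in\mathbb{R}^{3\times3}:QQ^T=I\}$. $s_j$ is row $j$ of $s$, and the identity feature of atom $j$ is the number $j$. *)

From HB Require Import structures.
From mathcomp Require Import all_boot all_order all_algebra.
From mathcomp Require Import boolp classical_sets reals.
Set Implicit Arguments. Unset Strict Implicit. Unset Printing Implicit Defensive.
Import Order.TTheory GRing.Theory Num.Theory.
Local Open Scope ring_scope.
Local Open Scope classical_set_scope.

Definition relpos (R : realType) (N : nat) (r : 'M[R]_(N, 3)) (i j : 'I_N) : 'rV[R]_3 :=
  row i r - row j r.

(* Identity-augmented feature  s~_j = Concatenate(s_j, j), atoms numbered 1..N. *)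
Definition idfeat (R : realType) (N d : nat) (s : 'M[R]_(N, d)) (j : 'I_N) : 'rV[R]_(d + 1) :=
  row_mx (row j s) (const_mx (j.+1)%:R).

Definition LE (R : realType) (N d : nat) (s : 'M[R]_(N, d)) (r : 'M[R]_(N, 3)) (i : 'I_N)
  : set ('rV[R]_(d + 1) * 'rV[R]_3) :=
  [set (idfeat s j, relpos r i j) | j in [set: 'I_N]].

(* Matrix whose rows are r_ij, j = 1..N; its row space is span{r_ij}. *)
Definition relmx (R : realType) (N : nat) (r : 'M[R]_(N, 3)) (i : 'I_N) : 'M[R]_(N, 3) :=
  \matrix_(j < N) relpos r i j.

Definition firstrows (R : realType) (k : nat) (E : 'M[R]_3) : 'M[R]_3 :=
  \matrix_(a < 3) (if (a < k)%N then row a E else 0).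

From HB Require Import structures.
From mathcomp Require Import all_boot all_order all_algebra.
From mathcomp Require Import boolp classical_sets reals.
Import Order.TTheory GRing.Theory Num.Theory.
Local Open Scope ring_scope.

(* The identity features number the atoms, so from the unordered set LE_i one
   can read off the relative positions r_i1, ..., r_iN in this order. Feed
   them to Gram-Schmidt, skipping vectors already in the span of the previous
   ones: the result is an orthonormal basis of span{r_ij} stored in the first
   k rows, the remaining rows being zero. Gram-Schmidt only uses inner products
   and linear combinations, which are preserved by an orthogonal o, so running
   it on the rows r_ij o^T yields the old output times o^T. *)

Section GramSchmidt.
Set Implicit Arguments.
Unset Strict Implicit.
Unset Printing Implicit Defensive.
Variables (R : rcfType) (n : nat).
Implicit Types (v u : 'rV[R]_n) (E : 'M[R]_n).

Lemma mulmx_tr_row m p (A : 'M[R]_(m, n)) (B : 'M[R]_(p, n)) a b :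
  (A *m B^T) a b = (row a A *m (row b B)^T) 0 0.
Proof. by rewrite !mxE; apply: eq_bigr => j _; rewrite !mxE. Qed.

Lemma dot_gt0 v : v != 0 -> 0 < (v *m v^T) 0 0.
Proof.
move=> v_neq0; have sq_ge0 j : 0 <= v 0 j * v^T j 0 by rewrite !mxE -expr2 sqr_ge0.
rewrite lt_def mxE sumr_ge0 ?andbT => [|j _]; last exact: sq_ge0.
apply: contra v_neq0 => /eqP v2_eq0; apply/eqP/rowP => j.
have /eqP := psumr_eq0P (fun i _ => sq_ge0 i) v2_eq0 (i := j) isT.
by rewrite !mxE mulf_eq0 orbb => /eqP.
Qed.

Definition normalize v := (Num.sqrt ((v *m v^T) 0 0))^-1 *: v.

Lemma normalize_dot v : v != 0 -> (normalize v *m (normalize v)^T) 0 0 = 1.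
Proof.
move=> v_neq0; rewrite /normalize linearZ /= -scalemxAl -scalemxAr scalerA mxE.
by rewrite -expr2 exprVn sqr_sqrtr ?ltW ?dot_gt0 // mulVf // gt_eqF ?dot_gt0.
Qed.

Lemma eqmx_normalize v : v != 0 -> (normalize v :=: v)%MS.
Proof. by move=> v_neq0; apply: eqmx_scale; rewrite invr_eq0 gt_eqF ?sqrtr_gt0 ?dot_gt0. Qed.

Lemma normalize_mulmx v (o : 'M[R]_n) :
  o^T *m o = 1%:M -> normalize (v *m o^T) = normalize v *m o^T.
Proof.
by move=> oTo; rewrite /normalize trmx_mul trmxK -mulmxA (mulmxA o^T) oTo mul1mx scalemxAl.
Qed.

Definition set_row k E u := \matrix_(a < n) if a == k :> nat then u else row a E.

Lemma set_row_mulmx k E u (o : 'M[R]_n) :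
  set_row k (E *m o^T) (u *m o^T) = set_row k E u *m o^T.
Proof. by apply/row_matrixP => a; rewrite row_mul !rowK; case: ifP; rewrite ?row_mul. Qed.

Lemma eqmx_set_row k E u : (k < n)%N ->
  (forall a : 'I_n, (k <= a)%N -> row a E = 0) -> (set_row k E u :=: E + u)%MS.
Proof.
move=> lt_kn E_low; apply/eqmxP; rewrite addsmx_sub; apply/and3P; split.
- apply/row_subP => a; rewrite rowK; case: ifP => _; first exact: addsmxSr.
  exact: submx_trans (row_sub a E) (addsmxSl _ _).
- apply/row_subP => a; case: (eqVneq (a : nat) k) => [a_k | a_neq_k].
    by rewrite E_low ?sub0mx ?a_k.
  by rewrite -(_ : row a (set_row k E u) = row a E) ?row_sub // rowK (negbTE a_neq_k).
- have u_row : row (Ordinal lt_kn) (set_row k E u) = u by rewrite rowK eqxx.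
  by rewrite -{1}u_row row_sub.
Qed.

Lemma pid_mx_mul_lowzero k m (A : 'M[R]_(n, m)) :
  (forall a : 'I_n, (k <= a)%N -> row a A = 0) -> pid_mx k *m A = A.
Proof.
move=> A_low; apply/matrixP => a c; rewrite !mxE (bigD1 a) //= big1 => [|b b_neq_a].
  rewrite mxE eqxx addr0 /=; case: ltnP => [_|le_ka]; first by rewrite mul1r.
  by move/rowP/(_ c): (A_low a le_ka); rewrite !mxE mul0r => ->.
by rewrite mxE -[(a == b :> nat)]/(a == b) eq_sym (negbTE b_neq_a) mul0r.
Qed.

Definition orthonormal_prefix (st : nat * 'M[R]_n) :=
  [/\ st.2 *m st.2^T = pid_mx st.1,
      forall a : 'I_n, (st.1 <= a)%N -> row a st.2 = 0 & (st.1 <= n)%N].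

Lemma orthonormal_prefix_rank st : orthonormal_prefix st -> \rank st.2 = st.1.
Proof.
case=> EEt E_low le_kn; apply/eqP; rewrite eqn_leq; apply/andP; split.
  by rewrite -{1}(pid_mx_mul_lowzero E_low) (leq_trans (mxrankM_maxl _ _)) ?rank_pid_mx.
by rewrite -{1}(rank_pid_mx R le_kn le_kn) -EEt mxrankM_maxl.
Qed.

Definition residual E v := v - v *m E^T *m E.

Lemma residual_orth st v : orthonormal_prefix st -> residual st.2 v *m st.2^T = 0.
Proof.
case=> EEt E_low _; have EtP : st.2^T *m pid_mx st.1 = st.2^T.
  by rewrite -tr_pid_mx -trmx_mul pid_mx_mul_lowzero.
by rewrite mulmxBl -!mulmxA EEt EtP subrr.
Qed.

Lemma residual_full E v : E *m E^T = 1%:M -> residual E v = 0.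
Proof. by move=> /mulmx1C EtE; rewrite /residual -mulmxA EtE mulmx1 subrr. Qed.

Lemma eqmx_adds_residual E v : (E + residual E v :=: E + v)%MS.
Proof. by rewrite /residual addrC; apply: addsmx_addKl; rewrite eqmx_opp submxMl. Qed.

Lemma residual_mulmx E v (o : 'M[R]_n) : o^T *m o = 1%:M ->
  residual (E *m o^T) (v *m o^T) = residual E v *m o^T.
Proof.
by move=> oTo; rewrite /residual trmx_mul trmxK mulmxBl !mulmxA -(mulmxA v o^T o) oTo mulmx1.
Qed.

Lemma orthonormal_prefix_set_row k E u : orthonormal_prefix (k, E) -> (k < n)%N ->
  (u *m u^T) 0 0 = 1 -> u *m E^T = 0 -> orthonormal_prefix (k.+1, set_row k E u).
Proof.
case=> /= EEt E_low _ lt_kn u_unit uEt; split => //=; last first.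
  by move=> a lt_ka; rewrite rowK (gtn_eqF lt_ka) E_low // ltnW.
have u_rowE b : (u *m (row b E)^T) 0 0 = 0.
  by rewrite -[u in LHS](row_id 0) -mulmx_tr_row uEt mxE.
have rowE_u a : (row a E *m u^T) 0 0 = 0.
  by rewrite -[u](row_id 0) -mulmx_tr_row -[E]trmxK -trmx_mul uEt !mxE.
apply/matrixP => a b; rewrite mulmx_tr_row !rowK [pid_mx _ _ _]mxE ltnS.
case: (eqVneq (a : nat) k) => [a_k|a_neq_k]; case: (eqVneq (b : nat) k) => [b_k|b_neq_k].
- by rewrite u_unit a_k b_k eqxx leqnn.
- by rewrite u_rowE a_k eq_sym (negbTE b_neq_k).
- by rewrite rowE_u b_k (negbTE a_neq_k).
- by rewrite -mulmx_tr_row EEt mxE [(a <= k)%N]leq_eqVlt (negbTE a_neq_k).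
Qed.

Definition gs_step (st : nat * 'M[R]_n) v : nat * 'M[R]_n :=
  let w := residual st.2 v in
  if w == 0 then st else (st.1.+1, set_row st.1 st.2 (normalize w)).

Lemma orthonormal_prefix_lt st v :
  orthonormal_prefix st -> residual st.2 v != 0 -> (st.1 < n)%N.
Proof.
case=> EEt _ le_kn; apply: contraNT; rewrite -leqNgt => le_nk.
by rewrite residual_full // EEt (_ : st.1 = n) ?pid_mx_1 //; apply/eqP; rewrite eqn_leq le_kn.
Qed.

Lemma gs_step_orthonormal st v :
  orthonormal_prefix st -> orthonormal_prefix (gs_step st v).
Proof.
move=> st_on; rewrite /gs_step; case: eqP => [//|/eqP w_neq0].
move: st st_on w_neq0 => [k E] st_on w_neq0.
apply: orthonormal_prefix_set_row => //; first exact: orthonormal_prefix_lt w_neq0.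
  exact: normalize_dot.
by rewrite /normalize -scalemxAl (residual_orth v st_on) scaler0.
Qed.

Lemma gs_step_eqmx st v : orthonormal_prefix st -> ((gs_step st v).2 :=: st.2 + v)%MS.
Proof.
move=> st_on; apply: eqmx_trans (eqmx_adds_residual _ _); rewrite /gs_step.
case: eqP => [-> | /eqP w_neq0] /=; first exact/eqmx_sym/addsmx0.
have lt_kn : (st.1 < n)%N by apply: orthonormal_prefix_lt w_neq0.
case: st_on => _ E_low _.
apply: eqmx_trans (eqmx_set_row _ lt_kn E_low) _.
exact: adds_eqmx (eqmx_refl _) (eqmx_normalize w_neq0).
Qed.

Lemma gs_step_mulmx (o : 'M[R]_n) st v : o^T *m o = 1%:M ->
  gs_step (st.1, st.2 *m o^T) (v *m o^T) = ((gs_step st v).1, (gs_step st v).2 *m o^T).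
Proof.
move=> oTo; rewrite /gs_step /= residual_mulmx //.
have -> : (residual st.2 v *m o^T == 0) = (residual st.2 v == 0).
  apply/eqP/eqP => [w_o | ->]; last exact: mul0mx.
  by rewrite -[residual _ _]mulmx1 -oTo mulmxA w_o mul0mx.
by case: ifP; rewrite ?normalize_mulmx ?set_row_mulmx //; case: st.
Qed.

Lemma foldl_gs_step_orthonormal st vs :
  orthonormal_prefix st -> orthonormal_prefix (foldl gs_step st vs).
Proof. by elim: vs st => [|v vs IHvs] st st_on //=; apply/IHvs/gs_step_orthonormal. Qed.

Lemma foldl_gs_step_sub m (M : 'M[R]_(m, n)) st vs :
  orthonormal_prefix st -> (st.2 <= M)%MS -> all (fun v => v <= M)%MS vs ->
  ((foldl gs_step st vs).2 <= M)%MS.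
Proof.
elim: vs st => [|v vs IHvs] st st_on //= stM /andP[vM vsM].
apply: IHvs vsM; first exact: gs_step_orthonormal.
by rewrite (gs_step_eqmx v st_on) addsmx_sub stM.
Qed.

Lemma foldl_gs_step_sup st vs : orthonormal_prefix st ->
  let F := (foldl gs_step st vs).2 in
  (st.2 <= F)%MS /\ all (fun v => v <= F)%MS vs.
Proof.
elim: vs st => [|v vs IHvs] st st_on /=; first by rewrite submx_refl.
have [stepF vsF] := IHvs _ (gs_step_orthonormal v st_on).
have step_eq := gs_step_eqmx v st_on.
by rewrite vsF !(submx_trans _ stepF) // step_eq ?addsmxSl ?addsmxSr.
Qed.

Lemma foldl_gs_step_mulmx (o : 'M[R]_n) st vs : o^T *m o = 1%:M ->
  foldl gs_step (st.1, st.2 *m o^T) (map (mulmx^~ o^T) vs)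
  = ((foldl gs_step st vs).1, (foldl gs_step st vs).2 *m o^T).
Proof. by move=> oTo; elim: vs st => [|v vs IHvs] st //=; rewrite gs_step_mulmx. Qed.

Definition gram_schmidt m (A : 'M[R]_(m, n)) :=
  foldl gs_step (0%N, 0) [seq row i A | i <- enum 'I_m].

Lemma orthonormal_prefix0 : orthonormal_prefix (0%N, 0).
Proof. by split=> [|a _|] /=; rewrite ?mul0mx ?pid_mx_0 ?row0. Qed.

Lemma gram_schmidt_orthonormal m (A : 'M[R]_(m, n)) : orthonormal_prefix (gram_schmidt A).
Proof. exact/foldl_gs_step_orthonormal/orthonormal_prefix0. Qed.

Lemma gram_schmidt_eqmx m (A : 'M[R]_(m, n)) : ((gram_schmidt A).2 :=: A)%MS.
Proof.
have [_ /allP rows_sub] := foldl_gs_step_sup [seq row i A | i <- enum 'I_m] orthonormal_prefix0.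
apply/eqmxP/andP; split.
  apply: foldl_gs_step_sub orthonormal_prefix0 (sub0mx _ _) _.
  by apply/allP => _ /mapP[i _ ->]; apply: row_sub.
by apply/row_subP => i; apply/rows_sub/map_f; rewrite mem_enum.
Qed.

Lemma gram_schmidt_mulmx m (A : 'M[R]_(m, n)) (o : 'M[R]_n) : o^T *m o = 1%:M ->
  gram_schmidt (A *m o^T) = ((gram_schmidt A).1, (gram_schmidt A).2 *m o^T).
Proof.
move=> oTo; rewrite /gram_schmidt -foldl_gs_step_mulmx //= mul0mx -map_comp.
by congr foldl; apply: eq_map => i; rewrite /= row_mul.
Qed.

End GramSchmidt.

Local Open Scope classical_set_scope.

Section LocalEnvironment.
Set Implicit Arguments.
Unset Strict Implicit.
Unset Printing Implicit Defensive.
Variables (R : realType) (d N n : nat).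

Definition env_pos (S : set ('rV[R]_(d + 1) * 'rV[R]_n)) (j : 'I_N) : 'rV[R]_n :=
  xget 0 (fun v => exists f, S (f, v) /\ f 0 (rshift d ord0) = j.+1%:R).

Definition env_mx (S : set ('rV[R]_(d + 1) * 'rV[R]_n)) : 'M[R]_(N, n) :=
  \matrix_j env_pos S j.

Lemma env_mx_image (s : 'M[R]_(N, d)) (x : 'I_N -> 'rV[R]_n) :
  env_mx [set (idfeat s j, x j) | j in [set: 'I_N]] = \matrix_j x j.
Proof.
apply/row_matrixP => j; rewrite !rowK; apply: xget_unique.
  by exists (idfeat s j); split; [exists j | rewrite /idfeat row_mxEr mxE].
move=> v [_ [[j' _ [<- <-]]]]; rewrite /idfeat row_mxEr mxE.
by move/eqP; rewrite eqr_nat eqSS => /eqP/val_inj ->.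
Qed.

End LocalEnvironment.

Lemma firstrows_id (R : realType) k (E : 'M[R]_3) :
  (forall a : 'I_3, (k <= a)%N -> row a E = 0) -> firstrows k E = E.
Proof. by move=> E_low; apply/row_matrixP => a; rewrite rowK; case: ltnP => // /E_low ->. Qed.

Theorem proposition6 (R : realType) (N d : nat) (hN : (1 < N)%N) (hd : (1 <= d)%N) :
  exists g : set ('rV[R]_(d + 1) * 'rV[R]_3) -> 'M[R]_3,
    (forall (s : 'M[R]_(N, d)) (r : 'M[R]_(N, 3)) (i : 'I_N) (o : 'M[R]_3),
        o *m o^T = 1%:M ->
        g [set (idfeat s j, relpos r i j *m o^T) | j in [set: 'I_N]]
        = g (LE s r i) *m o^T) /\
    (forall (s : 'M[R]_(N, d)) (r : 'M[R]_(N, 3)) (i : 'I_N),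
        let E := g (LE s r i) in
        let k := \rank E in
        (forall a b : 'I_3, (a < k)%N -> (b < k)%N ->
            (row a E *m (row b E)^T) 0 0 = (a == b)%:R) /\
        (forall a : 'I_3, (k <= a)%N -> row a E = 0) /\
        (firstrows k E == relmx r i)%MS).
Proof.
exists (fun S => (gram_schmidt (env_mx N S)).2); split.
  move=> s r i o oo; rewrite /LE !env_mx_image.
  have -> : \matrix_j (relpos r i j *m o^T) = relmx r i *m o^T.
    by apply/row_matrixP => j; rewrite row_mul !rowK.
  by rewrite gram_schmidt_mulmx //; apply: mulmx1C.
move=> s r i E k; rewrite {}/k {}/E /LE env_mx_image -/(relmx r i).
have GS_on := gram_schmidt_orthonormal (relmx r i).
have [EEt E_low _] := GS_on; rewrite orthonormal_prefix_rank //.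
split; first by move=> a b lt_ak lt_bk; rewrite -mulmx_tr_row EEt mxE lt_ak andbT.
by split=> //; rewrite firstrows_id //; apply/eqmxP/gram_schmidt_eqmx.
Qed.
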